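(* Consider the two-layer evolutionary process described in the context, with death-Birth updating in both layers, and let $\boldsymbol{\xi}=(\xi^{[1]},\xi^{[2]})\in\{0,1\}^N\times\{0,1\}^N$ be any initial state that is not one of the four states in which both layers are monomorphic. Let $\rho^{[1]}(\boldsymbol{\xi})$ be the probability that, starting from $\boldsymbol{\xi}$, layer 1 eventually consists only of cooperators. Then, under weak selection, cooperation is favored, i.e. $$\left.\frac{\mathrm{d}}{\mathrm{d}\delta}\rho^{[1]}(\boldsymbol{\xi})\right|_{\delta=0}>0,$$ if and only if $$c\,\theta_2+b\,(\theta_1-\theta_3)-(r-1)\,\phi_{2,0}>0 .$$
   Context: There are $N\ge 2$ individuals $1,\dots,N$. For each layer $L\in\{1,2\}$ there is a connected undirected weighted graph on $\{1,\dots,N\}$ with symmetric nonnegative weights $w^{[L]}_{ij}$; let $s^{[L]}_i=\sum_j w^{[L]}_{ij}>0$, $p^{[L]}_{ij}=w^{[L]}_{ij}/s^{[L]}_i$, let $P^{[L]}=(p^{[L]}_{ij})$, and let $\pi^{[L]}_i=s^{[L]}_i/\sum_k s^{[L]}_k$. A state is $\mathbf{x}=(x^{[1]},x^{[2]})\in\{0,1\}^N\times\{0,1\}^N$; $x^{[1]}_i=1$ ($0$) means individual $i$ is a cooperator (defector) in layer 1, and $x^{[2]}_i=1$ ($0$) means $i$ is a mutant (resident) in layer 2. With parameters $b,c$ and $r\ge 0$, the payoff of $i$ is $u_i=u^{[1]}_i+u^{[2]}_i$, where $u^{[1]}_i=-c\,x^{[1]}_i+\sum_j b\,p^{[1]}_{ij}x^{[1]}_j$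 (donation game) and $u^{[2]}_i=(r-1)x^{[2]}_i+1$ (constant selection). The fecundity is $F_i=1+\delta u_i$, with selection strength $\delta\ge0$. In each time step, simultaneously and independently in each layer $L$: an individual $i$ is chosen uniformly at random, then $j$ is chosen with probability $w^{[L]}_{ij}F_j/\sum_k w^{[L]}_{ik}F_k$, and $x^{[L]}_i$ is replaced by $x^{[L]}_j$ (death-Birth rule in both layers). Let $\hat\xi^{[L]}=\sum_i\pi^{[L]}_i\xi^{[L]}_i$. Let $(\beta_{ij})$ be the unique solution of: $\beta_{ii}=N(\xi^{[1]}_i-\hat\xi^{[1]})+\sum_k p^{[1]}_{ik}\beta_{kk}$ for all $i$; $\beta_{ij}=\tfrac N2(\xi^{[1]}_i\xi^{[1]}_j-\hat\xi^{[1]})+\tfrac12\sum_k p^{[1]}_{ik}\beta_{kj}+\tfrac12\sum_k p^{[1]}_{jk}\beta_{ik}$ for $i\ne j$; and $\sum_i\pi^{[1]}_i\beta_{ii}=0$. Let $(\gamma_{ij})$ be the unique solution of: for all $i,j$, $\gamma_{ij}=\frac{N^2}{2N-1}(\xi^{[1]}_i\xi^{[2]}_j-\hat\xi^{[1]}\hat\xi^{[2]})+\frac{1}{2N-1}\sum_{k_1,k_2}p^{[1]}_{ik_1}p^{[2]}_{jk_2}\gamma_{k_1k_2}+\frac{N-1}{2N-1}\Big(\sum_{k}p^{[1]}_{ik}\gamma_{kj}+\sum_k p^{[2]}_{jk}\gamma_{ik}\Big)$, together with $\sum_i\pi^{[1]}_i\gamma_{ii}=0$. Define $\theta_n=\sum_{i,j}\pi^{[1]}_i\big((P^{[1]})^n\big)_{ij}\beta_{ij}$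 and $\phi_{n,m}=\sum_{i,j}\pi^{[1]}_i\big((P^{[1]})^n(P^{[2]})^m\big)_{ij}\gamma_{ij}$. *)

From HB Require Import structures.
From mathcomp Require Import all_boot all_order all_algebra.
From mathcomp Require Import all_classical all_reals all_analysis.
Set Implicit Arguments.
Unset Strict Implicit.
Unset Printing Implicit Defensive.
Import Order.TTheory GRing.Theory Num.Theory.
Import numFieldNormedType.Exports.
Local Open Scope classical_set_scope.
Local Open Scope ring_scope.

Section TwoLayer.
Variable R : realType.
Variable N : nat.

Definition b2r (x : bool) : R := (x : nat)%:R.

Definition strength (w : 'M[R]_N) (i : 'I_N) : R := \sum_(j < N) w i j.

Definition transP (w : 'M[R]_N) : 'M[R]_N :=
  \matrix_(i < N, j < N) (w i j / strength w i).

Definition statdist (w : 'M[R]_N) (i : 'I_N) : R :=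
  strength w i / \sum_(k < N) strength w k.

Definition avg (w : 'M[R]_N) (z : {ffun 'I_N -> bool}) : R :=
  \sum_(i < N) statdist w i * b2r (z i).

Definition weighted_graph (w : 'M[R]_N) : Prop :=
  [/\ forall i j, w i j = w j i,
      forall i j, 0 <= w i j,
      forall i, 0 < strength w i &
      forall i j, connect (fun k l => 0 < w k l) i j].

Definition state : Type := ({ffun 'I_N -> bool} * {ffun 'I_N -> bool})%type.

Definition monomorphic (z : {ffun 'I_N -> bool}) : bool :=
  [forall i, forall j, z i == z j].

(* u_i = u^[1]_i + u^[2]_i *)
Definition payoff (w1 : 'M[R]_N) (b c r : R) (x : state) (i : 'I_N) : R :=
  (- c * b2r (x.1 i) + \sum_(j < N) b * transP w1 i j * b2r (x.1 j))
  + ((r - 1) * b2r (x.2 i) + 1).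

Definition fecundity (w1 : 'M[R]_N) (b c r delta : R) (x : state) (i : 'I_N) : R :=
  1 + delta * payoff w1 b c r x i.

Definition replace (z : {ffun 'I_N -> bool}) (i : 'I_N) (v : bool) :
  {ffun 'I_N -> bool} := [ffun k => if k == i then v else z k].

Definition layer_trans (w : 'M[R]_N) (F : 'I_N -> R)
    (z z' : {ffun 'I_N -> bool}) : R :=
  \sum_(i < N) (N%:R)^-1 *
    \sum_(j < N) (if z' == replace z i (z j)
                  then w i j * F j / \sum_(k < N) w i k * F k else 0).

Definition trans (w1 w2 : 'M[R]_N) (b c r delta : R) (x y : state) : R :=
  layer_trans w1 (fecundity w1 b c r delta x) x.1 y.1 *
  layer_trans w2 (fecundity w1 b c r delta x) x.2 y.2.

Definition allC (x : state) : bool := [forall i, x.1 i].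

Fixpoint hit_by (w1 w2 : 'M[R]_N) (b c r delta : R) (t : nat) (x : state) : R :=
  if allC x then 1 else
  match t with
  | 0 => 0
  | t'.+1 => \sum_(y : state) trans w1 w2 b c r delta x y * hit_by w1 w2 b c r delta t' y
  end.

Definition rho1 (w1 w2 : 'M[R]_N) (b c r delta : R) (xi : state) : R :=
  lim ((fun t => hit_by w1 w2 b c r delta t xi) @ \oo).

Definition beta_eqs (w1 : 'M[R]_N) (xi1 : {ffun 'I_N -> bool}) (beta : 'M[R]_N) : Prop :=
  [/\ forall i, beta i i = N%:R * (b2r (xi1 i) - avg w1 xi1)
                           + \sum_(k < N) transP w1 i k * beta k k,
      forall i j, i != j ->
        beta i j = N%:R / 2 * (b2r (xi1 i) * b2r (xi1 j) - avg w1 xi1)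
                   + 2^-1 * \sum_(k < N) transP w1 i k * beta k j
                   + 2^-1 * \sum_(k < N) transP w1 j k * beta i k &
      \sum_(i < N) statdist w1 i * beta i i = 0].

Definition gamma_eqs (w1 w2 : 'M[R]_N) (xi : state) (gamma : 'M[R]_N) : Prop :=
  (forall i j,
     gamma i j = (N%:R ^+ 2) / (2 * N%:R - 1)
                   * (b2r (xi.1 i) * b2r (xi.2 j) - avg w1 xi.1 * avg w2 xi.2)
               + (2 * N%:R - 1)^-1
                   * \sum_(k1 < N) \sum_(k2 < N)
                       transP w1 i k1 * transP w2 j k2 * gamma k1 k2
               + (N%:R - 1) / (2 * N%:R - 1)
                   * (\sum_(k < N) transP w1 i k * gamma k j
                      + \sum_(k < N) transP w2 j k * gamma i k))
  /\ \sum_(i < N) statdist w1 i * gamma i i = 0.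

Definition theta (w1 beta : 'M[R]_N) (n : nat) : R :=
  \sum_(i < N) \sum_(j < N) statdist w1 i * (transP w1 ^+ n) i j * beta i j.

Definition phi (w1 w2 gamma : 'M[R]_N) (n m : nat) : R :=
  \sum_(i < N) \sum_(j < N)
    statdist w1 i * ((transP w1 ^+ n) *m (transP w2 ^+ m)) i j * gamma i j.

End TwoLayer.

From HB Require Import structures.
From mathcomp Require Import all_boot all_order all_algebra.
From mathcomp Require Import all_classical all_reals all_analysis.
From mathcomp Require Import ring lra zify.
Import Order.TTheory GRing.Theory Num.Theory.
Import numFieldNormedType.Exports.
Local Open Scope classical_set_scope.
Local Open Scope ring_scope.
Set Implicit Arguments.
Unset Strict Implicit.
Unset Printing Implicit Defensive.

(* At delta = 0 both layers drift neutrally and the pi-weighted frequency of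
   cooperators [avg w1 x.1] is a martingale that equals rho on the four
   absorbing states, so rho_0 = avg.  With A_d = I - diag(transient) T_d, the
   gap e_d = rho_d - avg solves A_d e_d = D_d, where D_d = 1_transient (T_d avg
   - avg) vanishes at d = 0.  A maximum principle for the neutral chain (from
   every transient state the number of defectors can strictly decrease) makes
   A_0 invertible, so Cramer's rule gives the slope (A_0^-1 D')(xi).  Row xi of
   A_0^-1 is the expected occupation of the neutral chain started at xi.  By
   reversibility of P^[1], D' is a fixed combination of theta-sums of the
   quadratic observables x^[1]_i x^[1]_j and x^[1]_i x^[2]_j, and the
   occupations of these observables solve, up to additive constants, the
   recurrences defining beta and gamma; those have unique solutions by a
   maximum principle on the connected graphs.  The slope is therefore
   N^-1 (c theta_2 + b (theta_1 - theta_3) - (r - 1) phi_{2,0}). *)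

Lemma mxBE (V : zmodType) m n (A B : 'M[V]_(m, n)) i j : (A - B) i j = A i j - B i j.
Proof. by rewrite !mxE. Qed.

Section Sums.
Variable R : realType.

Lemma sum_delta (I : finType) (F : I -> R) a : \sum_i ((a == i)%:R * F i) = F a.
Proof.
rewrite (bigD1 a) //= eqxx mul1r big1 ?addr0 // => i /negbTE.
by rewrite eq_sym => ->; rewrite mul0r.
Qed.

Lemma sum_invn (N : nat) : (0 < N)%N -> \sum_(i < N) N%:R^-1 = 1 :> R.
Proof.
by move=> N_gt0; rewrite sumr_const card_ord -[LHS]mulr_natr mulVf // pnatr_eq0 -lt0n.
Qed.

Lemma exists_argmax (I : finType) (i0 : I) (f : I -> R) :
  exists i, forall j, f j <= f i.
Proof. by case: (@arg_maxP _ _ _ i0 xpredT f isT) => i _ H; exists i => j; apply: H. Qed.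

Lemma convex_comb_eq_max (I : finType) (a f : I -> R) M :
  (forall k, 0 <= a k) -> \sum_k a k = 1 -> (forall k, f k <= M) ->
  \sum_k a k * f k = M -> forall k, 0 < a k -> f k = M.
Proof.
move=> a_ge0 a_sum1 f_le E k ak_gt0.
have : \sum_k a k * (M - f k) = 0.
  under eq_bigr do rewrite mulrBr.
  by rewrite sumrB -big_distrl /= a_sum1 mul1r E subrr.
have terms_ge0 l : true -> 0 <= a l * (M - f l).
  by move=> _; rewrite mulr_ge0 // subr_ge0.
move=> /(psumr_eq0P terms_ge0) /(_ k isT) /eqP.
by rewrite mulf_eq0 gt_eqF //= subr_eq0 => /eqP.
Qed.

End Sums.

Section Configurations.
Variable R : realType.

Lemma b2rK (x : bool) : b2r R x * b2r R x = b2r R x.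
Proof. by case: x; rewrite /b2r ?mulr1 ?mulr0. Qed.

Lemma replaceE (N : nat) (z : {ffun 'I_N -> bool}) i v k :
  b2r R (replace z i v k) = b2r R (z k) + (k == i)%:R * (b2r R v - b2r R (z k)).
Proof.
rewrite /replace ffunE; case: eqP => [->|_]; rewrite ?mul1r ?mul0r ?addr0 //.
by rewrite addrC subrK.
Qed.

Lemma monomorphicP (N : nat) (z : {ffun 'I_N -> bool}) i k :
  monomorphic z -> z i = z k.
Proof. by move=> /forallP /(_ i) /forallP /(_ k) /eqP. Qed.

Lemma replace_monomorphic (N : nat) (z : {ffun 'I_N -> bool}) i j :
  monomorphic z -> replace z i (z j) = z.
Proof.
by move=> mz; apply/ffunP => k; rewrite ffunE; case: eqP => // ->; apply: monomorphicP.
Qed.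

Lemma b2r_monomorphic (N : nat) (z : {ffun 'I_N -> bool}) a :
  monomorphic z -> b2r R (z a) = b2r R [forall i, z i].
Proof.
move=> mz; case: (boolP [forall i, z i]) => [/forallP -> //|].
by rewrite negb_forall => /existsP [k]; rewrite (monomorphicP a k mz) => /negbTE ->.
Qed.

End Configurations.

Section RandomWalk.
Variables (R : realType) (N : nat) (w : 'M[R]_N).
Hypothesis hw : weighted_graph w.

Local Notation P := (transP w).
Local Notation pi := (statdist w).

Lemma weight_sym i j : w i j = w j i. Proof. by case: hw. Qed.
Lemma weight_ge0 i j : 0 <= w i j. Proof. by case: hw. Qed.
Lemma strength_gt0 i : 0 < strength w i. Proof. by case: hw. Qed.

Lemma transP_ge0 i j : 0 <= P i j.
Proof. by rewrite mxE divr_ge0 ?weight_ge0 // ltW ?strength_gt0. Qed.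

Lemma transP_gt0 i j : 0 < w i j -> 0 < P i j.
Proof. by move=> wij_gt0; rewrite mxE divr_gt0 ?strength_gt0. Qed.

Lemma sum_transP i : \sum_j P i j = 1.
Proof.
under eq_bigr do rewrite mxE.
by rewrite -big_distrl /= divff // gt_eqF ?strength_gt0.
Qed.

Lemma sum_transP_subr i (f : 'I_N -> R) k :
  \sum_j P i j * (f j - k) = \sum_j P i j * f j - k.
Proof.
under eq_bigr do rewrite mulrBr.
by rewrite sumrB -big_distrl /= sum_transP mul1r.
Qed.

Lemma transP_mean_le (f : 'I_N -> R) M i :
  (forall k, f k <= M) -> \sum_k P i k * f k <= M.
Proof.
move=> f_le; rewrite -[leRHS]mul1r -(sum_transP i) big_distrl /=.
by apply: ler_sum => k _; rewrite ler_wpM2l ?transP_ge0.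
Qed.

Lemma sum_transPX n i : \sum_j (P ^+ n) i j = 1.
Proof.
elim: n i => [|n IHn] i.
  by rewrite expr0 -(sum_delta (fun=> 1) i); apply: eq_bigr => j _; rewrite mxE mulr1.
rewrite exprS; under eq_bigr do rewrite -mulmxE mxE.
rewrite exchange_big /=; under eq_bigr do rewrite -big_distrr /= IHn mulr1.
exact: sum_transP.
Qed.

Hypothesis N_gt0 : (0 < N)%N.

Lemma sum_strength_gt0 : 0 < \sum_k strength w k.
Proof.
rewrite (bigD1 (Ordinal N_gt0)) //= ltr_pwDl ?strength_gt0 //.
by apply: sumr_ge0 => k _; rewrite ltW ?strength_gt0.
Qed.

Lemma sum_statdist : \sum_i pi i = 1.
Proof. by rewrite -big_distrl /= divff // gt_eqF ?sum_strength_gt0. Qed.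

Lemma avg_monomorphic z : monomorphic z -> avg w z = b2r R [forall i, z i].
Proof.
move=> mz; rewrite /avg; under eq_bigr => i _ do rewrite (b2r_monomorphic R i mz).
by rewrite -big_distrl /= sum_statdist mul1r.
Qed.

Lemma statdist_reversible i j : pi i * P i j = pi j * P j i.
Proof.
rewrite /statdist !mxE (weight_sym j i).
have := strength_gt0 i; have := strength_gt0 j; have := sum_strength_gt0.
by move=> /gt_eqF S0 /gt_eqF sj0 /gt_eqF si0; field; rewrite S0 si0 sj0.
Qed.

Lemma statdist_reversibleX n i j : pi i * (P ^+ n) i j = pi j * (P ^+ n) j i.
Proof.
elim: n i j => [|n IHn] i j.
  by rewrite expr0 !mxE eq_sym; case: eqP => [->|]; rewrite ?mulr0.
rewrite [in LHS]exprSr [in RHS]exprS -!mulmxE !mxE !big_distrr /=.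
by apply: eq_bigr => k _; rewrite mulrA IHn mulrAC statdist_reversible -mulrA.
Qed.

Lemma sum_statdist_transP (f : 'I_N -> R) :
  \sum_i pi i * \sum_j P i j * f j = \sum_j pi j * f j.
Proof.
under eq_bigr do rewrite big_distrr /=.
rewrite exchange_big /=; apply: eq_bigr => j _.
under eq_bigr do rewrite mulrA statdist_reversible -mulrA.
by rewrite -big_distrr /= -big_distrl /= sum_transP mul1r.
Qed.

Lemma sum_statdist_drift (f : 'I_N -> R) :
  \sum_i pi i * \sum_j P i j * (f j - f i) = 0.
Proof.
under eq_bigr do rewrite sum_transP_subr mulrBr.
by rewrite sumrB sum_statdist_transP subrr.
Qed.

Lemma sum_statdist_transPX m n j k :
  \sum_i pi i * (P ^+ m) i j * (P ^+ n) i k = pi j * (P ^+ (m + n)) j k.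
Proof.
rewrite exprD -mulmxE mxE big_distrr /=; apply: eq_bigr => i _.
by rewrite statdist_reversibleX mulrA.
Qed.

Lemma weight_closed_all (p : pred 'I_N) i0 :
  (forall i k, p i -> 0 < w i k -> p k) -> p i0 -> forall j, p j.
Proof.
move=> p_closed pi0 j; have [_ _ _ /(_ i0 j) /connectP [s ps ->]] := hw.
elim: s i0 pi0 ps => [|k s IHs] i0 pi0 //= /andP [wk ps].
exact: IHs (p_closed _ _ pi0 wk) ps.
Qed.

Lemma exists_weight_gt0 i : exists j, 0 < w i j.
Proof.
apply/existsP; apply: contraLR (strength_gt0 i); rewrite negb_exists -leNgt.
by move=> /forallP w_le0; apply: sumr_le0 => j _; rewrite leNgt w_le0.
Qed.

Lemma exists_crossing_weight (z : {ffun 'I_N -> bool}) :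
  ~~ monomorphic z -> exists i j, [/\ 0 < w i j, ~~ z i & z j].
Proof.
case: (boolP [exists i, exists j, [&& 0 < w i j, ~~ z i & z j]]).
  by move=> /existsP [i /existsP [j /and3P [wij zi zj]]]; exists i, j.
rewrite negb_exists => /forallP noncross zNmono.
have [k zk] : exists k, ~~ z k.
  apply/existsP; apply: contraNT zNmono; rewrite negb_exists => /forallP zall.
  by apply/forallP => i; apply/forallP => j; rewrite (negbNE (zall i)) (negbNE (zall j)).
have zNall l : ~~ z l.
  apply: (weight_closed_all (p := fun l => ~~ z l) _ zk) => a b za wab.
  apply: contraL za => zb.
  by move: (noncross a) => /existsPn /(_ b); rewrite wab zb andbT.
case/negP: zNmono; apply/forallP => i; apply/forallP => j.
by rewrite !(negbTE (zNall _)).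
Qed.

Lemma transP_harmonic_const (f : 'I_N -> R) :
  (forall i, f i = \sum_k P i k * f k) -> forall i j, f i = f j.
Proof.
move=> f_harm; have [m f_le] := exists_argmax (Ordinal N_gt0) f.
suff f_max j : f j == f m by move=> i j; rewrite (eqP (f_max i)) (eqP (f_max j)).
apply: (weight_closed_all (p := fun j => f j == f m)) (eqxx _) j => i k /eqP fi wik.
apply/eqP; apply: (convex_comb_eq_max (transP_ge0 i) (sum_transP i) f_le).
  by rewrite -fi -f_harm.
exact: transP_gt0.
Qed.

End RandomWalk.

Section DeathBirth.
Variables (R : realType) (N : nat) (w : 'M[R]_N) (F : 'I_N -> R).

Definition birth_prob i j := w i j * F j / \sum_(k < N) w i k * F k.

Lemma layer_trans_mean (z0 : {ffun 'I_N -> bool}) (f : {ffun 'I_N -> bool} -> R) :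
  \sum_z layer_trans w F z0 z * f z =
  \sum_i N%:R^-1 * \sum_j birth_prob i j * f (replace z0 i (z0 j)).
Proof.
under eq_bigr do rewrite big_distrl /=.
rewrite exchange_big /=; apply: eq_bigr => i _.
under eq_bigr do rewrite -mulrA big_distrl /=.
rewrite -big_distrr /= exchange_big /=; congr (_ * _); apply: eq_bigr => j _.
rewrite (bigD1 (replace z0 i (z0 j))) //= eqxx [X in _ + X]big1 ?addr0 //.
by move=> z /negbTE ->; rewrite mul0r.
Qed.

Hypothesis hw : weighted_graph w.
Hypothesis F_gt0 : forall j, 0 < F j.

Lemma birth_den_gt0 i : 0 < \sum_(k < N) w i k * F k.
Proof.
have [j wij] := exists_weight_gt0 hw i.
rewrite (bigD1 j) //= ltr_pwDl ?mulr_gt0 //.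
by apply: sumr_ge0 => k _; rewrite mulr_ge0 ?weight_ge0 ?ltW.
Qed.

Lemma birth_prob_ge0 i j : 0 <= birth_prob i j.
Proof. by rewrite divr_ge0 ?mulr_ge0 ?weight_ge0 ?ltW ?birth_den_gt0. Qed.

Lemma birth_prob_gt0 i j : 0 < w i j -> 0 < birth_prob i j.
Proof. by move=> wij; rewrite divr_gt0 ?mulr_gt0 ?birth_den_gt0. Qed.

Lemma sum_birth_prob i : \sum_j birth_prob i j = 1.
Proof. by rewrite -big_distrl /= divff // gt_eqF ?birth_den_gt0. Qed.

Lemma layer_trans_ge0 z0 z : 0 <= layer_trans w F z0 z.
Proof.
apply: sumr_ge0 => i _; rewrite mulr_ge0 ?invr_ge0 //.
by apply: sumr_ge0 => j _; case: ifP => // _; apply: birth_prob_ge0.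
Qed.

Lemma layer_trans_replace_gt0 z i j :
  0 < w i j -> 0 < layer_trans w F z (replace z i (z j)).
Proof.
move=> wij; have N_gt0 : (0 < N)%N by apply: leq_ltn_trans (ltn_ord i).
rewrite /layer_trans (bigD1 i) //= ltr_pwDl //.
  rewrite mulr_gt0 ?invr_gt0 ?ltr0n // (bigD1 j) //= eqxx ltr_pwDl ?birth_prob_gt0 //.
  by apply: sumr_ge0 => k _; case: ifP => // _; apply: birth_prob_ge0.
apply: sumr_ge0 => k _; rewrite mulr_ge0 ?invr_ge0 //.
by apply: sumr_ge0 => l _; case: ifP => // _; apply: birth_prob_ge0.
Qed.

Hypothesis N_gt0 : (0 < N)%N.

Lemma sum_layer_trans z0 : \sum_z layer_trans w F z0 z = 1.
Proof.
under eq_bigr do rewrite -[layer_trans _ _ _ _]mulr1.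
rewrite layer_trans_mean -[RHS](sum_invn R N_gt0); apply: eq_bigr => i _.
by under eq_bigr do rewrite mulr1; rewrite sum_birth_prob mulr1.
Qed.

Lemma layer_trans_monomorphic z0 z :
  monomorphic z0 -> layer_trans w F z0 z = (z == z0)%:R.
Proof.
move=> mz0; rewrite /layer_trans.
under eq_bigr do under eq_bigr do rewrite replace_monomorphic //.
case: eqP => _; last by rewrite big1 // => i _; rewrite big1 ?mulr0.
under eq_bigr do rewrite -/(birth_prob _ _) sum_birth_prob mulr1.
exact: sum_invn.
Qed.

End DeathBirth.

Section Chain.
Variables (R : realType) (N : nat) (w1 w2 : 'M[R]_N) (b c r : R).
Hypothesis N_gt0 : (0 < N)%N.
Hypotheses (hw1 : weighted_graph w1) (hw2 : weighted_graph w2).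

Definition fecundity_pos d := forall (x : state N) j, 0 < fecundity w1 b c r d x j.

Lemma fecundity0 x j : fecundity w1 b c r 0 x j = 1.
Proof. by rewrite /fecundity mul0r addr0. Qed.

Lemma fecundity_pos0 : fecundity_pos 0.
Proof. by move=> x j; rewrite fecundity0. Qed.

Lemma trans_mean_prod d x (f1 f2 : {ffun 'I_N -> bool} -> R) :
  \sum_(y : state N) trans w1 w2 b c r d x y * (f1 y.1 * f2 y.2) =
  (\sum_z layer_trans w1 (fecundity w1 b c r d x) x.1 z * f1 z) *
  (\sum_z layer_trans w2 (fecundity w1 b c r d x) x.2 z * f2 z).
Proof.
rewrite big_distrl /=; under eq_bigr do rewrite big_distrr /=.
by rewrite pair_big /=; apply: eq_bigr => -[y1 y2] _; rewrite mulrACA.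
Qed.

Variable d : R.
Hypothesis Fd_pos : fecundity_pos d.

Local Notation T := (trans w1 w2 b c r d).
Local Notation hit := (hit_by w1 w2 b c r d).
Local Notation rho := (rho1 w1 w2 b c r d).

Lemma trans_mean_fst x (f : {ffun 'I_N -> bool} -> R) :
  \sum_(y : state N) T x y * f y.1 =
  \sum_z layer_trans w1 (fecundity w1 b c r d x) x.1 z * f z.
Proof.
transitivity (\sum_(y : state N) T x y * (f y.1 * (fun=> 1) y.2)).
  by apply: eq_bigr => y _; rewrite mulr1.
rewrite (trans_mean_prod d x f (fun=> 1)); under [X in _ * X]eq_bigr do rewrite mulr1.
by rewrite sum_layer_trans ?mulr1.
Qed.

Lemma trans_ge0 x y : 0 <= T x y.
Proof. by rewrite mulr_ge0 ?layer_trans_ge0. Qed.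

Lemma sum_trans x : \sum_(y : state N) T x y = 1.
Proof.
under eq_bigr do rewrite -[T _ _]mulr1.
rewrite (trans_mean_fst x (fun=> 1)); under eq_bigr do rewrite mulr1.
exact: sum_layer_trans.
Qed.

Lemma trans_absorbing x y :
  monomorphic x.1 -> monomorphic x.2 -> T x y = (y == x)%:R.
Proof.
move=> m1 m2; rewrite /trans !layer_trans_monomorphic //.
case: x y {m1 m2} => x1 x2 [y1 y2]; rewrite xpair_eqE.
by do 2 case: eqP; rewrite /= ?mulr1 ?mulr0.
Qed.

Lemma hit_allC t x : allC x -> hit t x = 1.
Proof. by case: t => [|t] /= ->. Qed.

Lemma hit_succ t x : hit t.+1 x = \sum_(y : state N) T x y * hit t y.
Proof.
case: (boolP (allC x)) => [Cx|NCx]; last by rewrite /= (negbTE NCx).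
have m1 : monomorphic x.1.
  by apply/forallP => i; apply/forallP => j; rewrite (forallP Cx i) (forallP Cx j).
rewrite hit_allC // -[LHS](sum_trans x); apply: eq_bigr => y _.
rewrite /trans layer_trans_monomorphic //.
by case: eqP => [y1E|]; rewrite ?mul0r // hit_allC ?mulr1 // /allC y1E.
Qed.

Lemma hit_bounds t x : 0 <= hit t x <= 1.
Proof.
elim: t x => [|t IHt] x; first by rewrite /=; case: ifP; rewrite ?lexx ?ler01.
rewrite hit_succ sumr_ge0 /=; last first.
  by move=> y _; rewrite mulr_ge0 ?trans_ge0 //; case/andP: (IHt y).
rewrite -(sum_trans x) ler_sum // => y _.
by rewrite ler_piMr ?trans_ge0 //; case/andP: (IHt y).
Qed.

Lemma hit_nondecreasing x : nondecreasing_seq (hit ^~ x).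
Proof.
apply/nondecreasing_seqP => t; elim: t x => [|t IHt] x.
  case: (boolP (allC x)) => [Cx|NCx]; first by rewrite !hit_allC.
  have -> : hit 0 x = 0 by rewrite /= (negbTE NCx).
  by case/andP: (hit_bounds 1 x).
by rewrite (hit_succ t.+1) (hit_succ t) ler_sum // => y _; rewrite ler_wpM2l ?trans_ge0.
Qed.

Lemma hit_cvg x : hit t x @[t --> \oo] --> rho x.
Proof.
have : hit t x @[t --> \oo] --> sup (range (hit ^~ x)).
  apply: nondecreasing_cvgn (hit_nondecreasing x) _.
  by exists 1 => _ [t _ <-]; case/andP: (hit_bounds t x).
by move=> cvg_hit; rewrite /rho1 (cvg_lim _ cvg_hit).
Qed.

Lemma rho_harmonic x : rho x = \sum_(y : state N) T x y * rho y.
Proof.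
have cvg_succ : (fun t => \sum_(y : state N) T x y * hit t y) @ \oo -->
    \sum_(y : state N) T x y * rho y.
  apply: cvg_big; [exact: add_continuous | move=> y _].
  by apply: cvgM; [exact: cvg_cst | exact: hit_cvg].
have := hit_cvg (x := x); rewrite -cvg_shiftS.
under eq_fun do rewrite hit_succ.
by move=> /cvg_lim <- //; rewrite (cvg_lim _ cvg_succ).
Qed.

Lemma rho_absorbing x :
  monomorphic x.1 -> monomorphic x.2 -> rho x = avg w1 x.1.
Proof.
move=> m1 m2; have hit_const t : hit t x = hit 0 x.
  elim: t => [//|t IHt]; rewrite hit_succ -IHt.
  under eq_bigr do rewrite trans_absorbing //.
  by rewrite (bigD1 x) //= eqxx mul1r big1 ?addr0 // => y /negbTE ->; rewrite mul0r.
have cvg0 : hit t x @[t --> \oo] --> hit 0 x.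
  by under eq_fun do rewrite hit_const; exact: cvg_cst.
rewrite -(cvg_lim _ (hit_cvg (x := x))) // (cvg_lim _ cvg0) //=.
by rewrite avg_monomorphic // /allC /b2r; case: ifP.
Qed.

End Chain.

Section NeutralLayer.
Variables (R : realType) (N : nat) (w : 'M[R]_N).
Hypothesis hw : weighted_graph w.

Local Notation P := (transP w).
Local Notation Y z a := (b2r R (z a)).

Definition neutral_mean (f : {ffun 'I_N -> bool} -> R) z :=
  \sum_i N%:R^-1 * \sum_j P i j * f (replace z i (z j)).

Lemma layer_trans_neutral (F : 'I_N -> R) z0 f :
  (forall j, F j = 1) -> \sum_z layer_trans w F z0 z * f z = neutral_mean f z0.
Proof.
move=> F1; rewrite layer_trans_mean; apply: eq_bigr => i _; congr (_ * _).
apply: eq_bigr => j _; rewrite /birth_prob F1 mulr1 mxE; congr (_ / _ * _).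
by apply: eq_bigr => k _; rewrite F1 mulr1.
Qed.

Lemma avg_replace z i v :
  avg w (replace z i v) = avg w z + statdist w i * (b2r R v - Y z i).
Proof.
rewrite /avg; under eq_bigr do rewrite replaceE mulrDr.
rewrite big_split /=; congr (_ + _).
under eq_bigr => k _ do rewrite mulrCA (eq_sym k i).
by rewrite (sum_delta (fun k => statdist w k * (b2r R v - Y z k))).
Qed.

Hypothesis N_gt0 : (0 < N)%N.

Lemma neutral_mean_affine (k : R) a a' (G G' : 'I_N -> R) :
  \sum_i N%:R^-1 * \sum_j P i j * (k + (a == i)%:R * G j + (a' == i)%:R * G' j) =
  k + N%:R^-1 * (\sum_j P a j * G j + \sum_j P a' j * G' j).
Proof.
have row_sum i : \sum_j P i j * (k + (a == i)%:R * G j + (a' == i)%:R * G' j) =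
    k + (a == i)%:R * \sum_j P i j * G j + (a' == i)%:R * \sum_j P i j * G' j.
  under eq_bigr do rewrite !mulrDr mulrCA [P i _ * (_ * G' _)]mulrCA.
  by rewrite !big_split /= -big_distrl /= sum_transP // mul1r -!big_distrr.
under eq_bigr do rewrite row_sum !mulrDr.
rewrite !big_split /= -big_distrl /= sum_invn // mul1r -addrA mulrDr.
by congr (_ + (_ + _)); under eq_bigr do rewrite mulrCA; rewrite sum_delta.
Qed.

Lemma neutral_mean_b2r a z :
  neutral_mean (fun z => Y z a) z = Y z a + N%:R^-1 * (\sum_j P a j * Y z j - Y z a).
Proof.
have zero : \sum_j P a j * (fun=> 0 : R) j = 0 by rewrite big1 // => j _; rewrite mulr0.
have := neutral_mean_affine (Y z a) a a (fun j => Y z j - Y z a) (fun=> 0).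
rewrite zero addr0 sum_transP_subr // => <-; apply: eq_bigr => i _; congr (_ * _).
by apply: eq_bigr => j _; rewrite replaceE mulr0 addr0.
Qed.

Lemma neutral_mean_b2r2 a a' z : a != a' ->
  neutral_mean (fun z => Y z a * Y z a') z = Y z a * Y z a' +
    N%:R^-1 * (\sum_j P a j * ((Y z j - Y z a) * Y z a')
               + \sum_j P a' j * (Y z a * (Y z j - Y z a'))).
Proof.
move=> aa'; rewrite -neutral_mean_affine; apply: eq_bigr => i _; congr (_ * _).
apply: eq_bigr => j _; congr (_ * _); rewrite !replaceE.
case: (eqVneq a i) => [ai|ai]; case: (eqVneq a' i) => [a'i|a'i] //=.
- by move: aa'; rewrite ai a'i eqxx.
- by rewrite !mul1r !mul0r !addr0 mulrDl.
- by rewrite !mul1r !mul0r !addr0 mulrDr.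
- by rewrite !mul0r !addr0.
Qed.

Lemma neutral_mean_avg z : neutral_mean (avg w) z = avg w z.
Proof.
rewrite /neutral_mean; under eq_bigr do under eq_bigr do rewrite avg_replace mulrDr.
under eq_bigr do rewrite big_split /= -big_distrl /= sum_transP // mul1r mulrDr.
rewrite big_split /= -big_distrl /= sum_invn // mul1r -[RHS]addr0; congr (_ + _).
rewrite -big_distrr /= -[RHS](mulr0 N%:R^-1); congr (_ * _).
rewrite -[RHS](sum_statdist_drift hw N_gt0 (fun j => Y z j)).
apply: eq_bigr => i _; rewrite big_distrr /=.
by apply: eq_bigr => j _; rewrite mulrCA.
Qed.

End NeutralLayer.

Definition defectors (N : nat) (z : {ffun 'I_N -> bool}) : nat := \sum_k (~~ z k : nat).

Lemma defectors_replace (N : nat) (z : {ffun 'I_N -> bool}) i j :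
  ~~ z i -> z j -> (defectors (replace z i (z j)) < defectors z)%N.
Proof.
move=> zi zj; rewrite /defectors (bigD1 i) //= [X in (_ < X)%N](bigD1 i) //= zi.
rewrite /replace ffunE eqxx zj add0n add1n ltnS leq_eqVlt; apply/orP; left.
by apply/eqP/eq_bigr => k /negbTE kNi; rewrite ffunE kNi.
Qed.

Lemma exists_layer_step (R : realType) (N : nat) (w : 'M[R]_N) z :
  weighted_graph w -> (0 < N)%N ->
  exists i j, 0 < w i j /\
    if monomorphic z then replace z i (z j) = z
    else (defectors (replace z i (z j)) < defectors z)%N.
Proof.
move=> hw N_gt0; case: (boolP (monomorphic z)) => mz.
  have [j wj] := exists_weight_gt0 hw (Ordinal N_gt0).
  by exists (Ordinal N_gt0), j; rewrite replace_monomorphic.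
have [i [j [wij zi zj]]] := exists_crossing_weight hw mz.
by exists i, j; rewrite defectors_replace.
Qed.

Section NeutralChain.
Variables (R : realType) (N : nat) (w1 w2 : 'M[R]_N) (b c r : R).
Hypothesis N_gt0 : (0 < N)%N.
Hypotheses (hw1 : weighted_graph w1) (hw2 : weighted_graph w2).

Local Notation T0 := (trans w1 w2 b c r 0).

Definition transient (x : state N) : bool := ~~ (monomorphic x.1 && monomorphic x.2).

Lemma trans0_mean_prod x (f1 f2 : {ffun 'I_N -> bool} -> R) :
  \sum_(y : state N) T0 x y * (f1 y.1 * f2 y.2) =
  neutral_mean w1 f1 x.1 * neutral_mean w2 f2 x.2.
Proof. by rewrite trans_mean_prod !layer_trans_neutral // => j; rewrite fecundity0. Qed.

Lemma trans0_mean_fst x (f : {ffun 'I_N -> bool} -> R) :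
  \sum_(y : state N) T0 x y * f y.1 = neutral_mean w1 f x.1.
Proof.
rewrite trans_mean_fst ?layer_trans_neutral //; last exact: fecundity_pos0.
by move=> j; rewrite fecundity0.
Qed.

Lemma trans0_mean_avg y : \sum_z T0 y z * avg w1 z.1 = avg w1 y.1.
Proof. by rewrite trans0_mean_fst // neutral_mean_avg. Qed.

Lemma trans0_mean_avg_prod y :
  \sum_z T0 y z * (avg w1 z.1 * avg w2 z.2) = avg w1 y.1 * avg w2 y.2.
Proof. by rewrite trans0_mean_prod // !neutral_mean_avg. Qed.

Lemma b2r11_absorbing y a a' :
  ~~ transient y -> b2r R (y.1 a) * b2r R (y.1 a') = avg w1 y.1.
Proof.
rewrite negbK => /andP [m1 _].
by rewrite avg_monomorphic // !(b2r_monomorphic R _ m1) b2rK.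
Qed.

Lemma b2r12_absorbing y a a' :
  ~~ transient y -> b2r R (y.1 a) * b2r R (y.2 a') = avg w1 y.1 * avg w2 y.2.
Proof.
rewrite negbK => /andP [m1 m2].
by rewrite !avg_monomorphic // (b2r_monomorphic R _ m1) (b2r_monomorphic R _ m2).
Qed.

Lemma transient_step x : transient x ->
  exists y, 0 < T0 x y /\
    (defectors y.1 + defectors y.2 < defectors x.1 + defectors x.2)%N.
Proof.
move=> x_tr; have [i1 [j1 [w1ij step1]]] := exists_layer_step x.1 hw1 N_gt0.
have [i2 [j2 [w2ij step2]]] := exists_layer_step x.2 hw2 N_gt0.
exists (replace x.1 i1 (x.1 j1), replace x.2 i2 (x.2 j2)); split.
  by rewrite mulr_gt0 ?layer_trans_replace_gt0 //; apply: fecundity_pos0.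
move: x_tr step1 step2; rewrite /transient /=.
case: (monomorphic x.1); case: (monomorphic x.2) => //= _.
- by move=> -> step2; rewrite ltn_add2l.
- by move=> step1 ->; rewrite ltn_add2r.
- by move=> step1 step2; lia.
Qed.

Lemma neutral_harmonic_le0 (h : state N -> R) :
  (forall x, transient x -> h x = \sum_y T0 x y * h y) ->
  (forall x, ~~ transient x -> h x = 0) -> forall x, h x <= 0.
Proof.
move=> h_harm h_abs; have [m h_le] := exists_argmax ([ffun=> true], [ffun=> true]) h.
suff : h m <= 0 by move=> hm_le0 x; apply: le_trans (h_le x) hm_le0.
rewrite leNgt; apply/negP => hm_gt0.
have descend x : h x = h m -> exists2 y, h y = h m &
    (defectors y.1 + defectors y.2 < defectors x.1 + defectors x.2)%N.
  move=> hx; have x_tr : transient x.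
    by apply: contraPT hm_gt0 => /h_abs hx0; rewrite -hx hx0 ltxx.
  have [y [Txy y_smaller]] := transient_step x_tr; exists y => //.
  apply: (convex_comb_eq_max (trans_ge0 hw1 hw2 (fecundity_pos0 w1 b c r) x)
            (sum_trans N_gt0 hw1 hw2 (fecundity_pos0 w1 b c r) x) h_le _ Txy).
  by rewrite -h_harm.
suff no_max n x : (defectors x.1 + defectors x.2 <= n)%N -> h x = h m -> False.
  exact: (no_max _ m (leqnn _) erefl).
elim: n x => [|n IHn] x x_small /descend [y hy y_smaller]; first by lia.
by apply: (IHn y) => //; lia.
Qed.

Lemma neutral_harmonic_eq0 (h : state N -> R) :
  (forall x, transient x -> h x = \sum_y T0 x y * h y) ->
  (forall x, ~~ transient x -> h x = 0) -> forall x, h x = 0.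
Proof.
move=> h_harm h_abs x; apply/eqP; rewrite eq_le neutral_harmonic_le0 //= -oppr_le0.
apply: (@neutral_harmonic_le0 (fun x => - h x)) => [y y_tr|y y_abs].
  by rewrite h_harm // -sumrN; apply: eq_bigr => z _; rewrite mulrN.
by rewrite h_abs ?oppr0.
Qed.

End NeutralChain.

Section AbsorptionSystem.
Variables (R : realType) (N : nat) (w1 w2 : 'M[R]_N) (b c r : R).
Hypothesis N_gt0 : (0 < N)%N.
Hypotheses (hw1 : weighted_graph w1) (hw2 : weighted_graph w2).

Local Notation T d := (trans w1 w2 b c r d).
Local Notation n := #|{: state N}|.

Definition state_at : 'I_n -> state N := @enum_val _ {: state N}.

Lemma state_atK x : state_at (enum_rank x) = x.
Proof. exact: enum_rankK. Qed.

Lemma enum_rank_state_at a : enum_rank (state_at a) = a.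
Proof. exact: enum_valK. Qed.

Lemma sum_state_at (f : state N -> R) : \sum_(a < n) f (state_at a) = \sum_x f x.
Proof. by rewrite (big_enum_val (A := {: state N})). Qed.

Definition absorb_coef d (x y : state N) : R :=
  (x == y)%:R - (transient x)%:R * T d x y.

Definition absorb_mx d : 'M[R]_n :=
  \matrix_(a1, a2) absorb_coef d (state_at a1) (state_at a2).

Lemma absorb_coef_mean d (h : state N -> R) x :
  \sum_y absorb_coef d x y * h y = h x - (transient x)%:R * \sum_y T d x y * h y.
Proof.
under eq_bigr do rewrite mulrBl.
rewrite sumrB (bigD1 x) //= eqxx mul1r big1 ?addr0; last first.
  by move=> y; rewrite eq_sym => /negbTE ->; rewrite mul0r.
by rewrite big_distrr /=; congr (_ - _); apply: eq_bigr => y _; rewrite mulrA.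
Qed.

Lemma absorb_mx_mul d (h : state N -> R) x :
  (absorb_mx d *m \col_a h (state_at a)) (enum_rank x) 0 =
  h x - (transient x)%:R * \sum_y T d x y * h y.
Proof.
rewrite -absorb_coef_mean -sum_state_at !mxE; apply: eq_bigr => a _.
by rewrite !mxE state_atK.
Qed.

Lemma absorb_mx0_unit : absorb_mx 0 \in unitmx.
Proof.
rewrite unitmxE unitfE -det_tr; apply/det0P => -[v v_neq0 vA0].
pose h x := v 0 (enum_rank x).
have h_sol x : h x - (transient x)%:R * \sum_y T 0 x y * h y = 0.
  have /matrixP /(_ 0 (enum_rank x)) := vA0; rewrite !mxE => vA0x.
  rewrite -[RHS]vA0x -absorb_mx_mul !mxE; apply: eq_bigr => a _.
  by rewrite !mxE mulrC /h enum_rank_state_at.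
have h0 : forall x, h x = 0.
  apply: (neutral_harmonic_eq0 N_gt0 hw1 hw2 (b := b) (c := c) (r := r)) => x.
    by move=> x_tr; move: (h_sol x); rewrite x_tr mul1r => /eqP; rewrite subr_eq0 => /eqP.
  by move=> /negbTE x_abs; move: (h_sol x); rewrite x_abs mul0r subr0.
move/negP: v_neq0; apply; apply/eqP/matrixP => i a; rewrite ord1 mxE.
by have := h0 (state_at a); rewrite /h enum_rank_state_at.
Qed.

Definition gap d (x : state N) := rho1 w1 w2 b c r d x - avg w1 x.1.

Definition drift d (x : state N) :=
  (transient x)%:R * (\sum_y T d x y * avg w1 y.1 - avg w1 x.1).

Lemma gap_cramer d : fecundity_pos w1 b c r d -> forall x,
  \det (absorb_mx d) * gap d x =
  (\adj (absorb_mx d) *m \col_a drift d (state_at a)) (enum_rank x) 0.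
Proof.
move=> Fd_pos x.
have gap_eq y : gap d y - (transient y)%:R * \sum_z T d y z * gap d z = drift d y.
  rewrite /gap /drift; case: (boolP (transient y)) => [_|]; last first.
    rewrite negbK => /andP [m1 m2].
    by rewrite rho_absorbing // subrr !mul0r subr0.
  under eq_bigr do rewrite mulrBr.
  by rewrite !mul1r sumrB -rho_harmonic //; ring.
have : absorb_mx d *m \col_a gap d (state_at a) = \col_a drift d (state_at a).
  apply/matrixP => a i; rewrite ord1 -{1}(enum_rank_state_at a) absorb_mx_mul.
  by rewrite gap_eq mxE.
by move=> <-; rewrite mulmxA mul_adj_mx mul_scalar_mx !mxE state_atK.
Qed.

Lemma drift0 x : drift 0 x = 0.
Proof. by rewrite /drift trans0_mean_fst // neutral_mean_avg // subrr mulr0. Qed.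

Lemma gap0 x : gap 0 x = 0.
Proof.
have := gap_cramer (fecundity_pos0 w1 b c r) x.
rewrite (_ : \col_a drift 0 (state_at a) = 0); last first.
  by apply/matrixP => a i; rewrite !mxE drift0.
rewrite mulmx0 mxE => /eqP; rewrite mulf_eq0 => /orP [|/eqP //].
by move: absorb_mx0_unit; rewrite unitmxE unitfE => /negbTE ->.
Qed.

End AbsorptionSystem.

Lemma cvg_right_affine (R : realType) (a k : R) : a + d * k @[d --> 0^'+] --> a.
Proof.
rewrite -[X in _ --> X]addr0 -[X in _ --> _ + X](mul0r k).
apply: cvgD; first exact: cvg_cst.
by apply: cvgMl; apply: cvg_at_right_filter; exact: cvg_id.
Qed.

Section MatrixContinuity.
Variables (R : realType) (T : Type) (F : set_system T).
Hypothesis FF : Filter F.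

Lemma cvg_det m (M : T -> 'M[R]_m) (M0 : 'M[R]_m) :
  (forall i j, M t i j @[t --> F] --> M0 i j) -> \det (M t) @[t --> F] --> \det M0.
Proof.
move=> cvg_entries; apply: cvg_big; [exact: add_continuous | move=> s _].
apply: cvgM; first exact: cvg_cst.
by apply: cvg_big; [exact: mul_continuous | move=> i _; exact: cvg_entries].
Qed.

Lemma cvg_adj m (M : T -> 'M[R]_m) (M0 : 'M[R]_m) :
  (forall i j, M t i j @[t --> F] --> M0 i j) ->
  forall i j, \adj (M t) i j @[t --> F] --> \adj M0 i j.
Proof.
move=> cvg_entries i j; under eq_fun do rewrite mxE /cofactor.
rewrite mxE /cofactor; apply: cvgM; first exact: cvg_cst.
apply: cvg_det => k l; under eq_fun do rewrite !mxE.
by rewrite !mxE; exact: cvg_entries.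
Qed.

End MatrixContinuity.

Section DriftDerivative.
Variables (R : realType) (N : nat) (w1 w2 : 'M[R]_N) (b c r : R).
Hypothesis N_gt0 : (0 < N)%N.
Hypotheses (hw1 : weighted_graph w1) (hw2 : weighted_graph w2).

Local Notation F d x := (fecundity w1 b c r d x).
Local Notation P := (transP w1).
Local Notation pi := (statdist w1).
Local Notation u x := (payoff w1 b c r x).
Local Notation Y x j := (b2r R (x.1 j)).

Definition drift' x := (transient x)%:R * (N%:R^-1 * \sum_i pi i *
  \sum_j P i j * (u x j - \sum_k P i k * u x k) * (Y x j - Y x i)).

Lemma drift_birth_prob d : fecundity_pos w1 b c r d -> forall x,
  drift w1 w2 b c r d x = (transient x)%:R * (N%:R^-1 * \sum_i pi i *
    \sum_j (birth_prob w1 (F d x) i j - P i j) * (Y x j - Y x i)).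
Proof.
move=> Fd_pos x; rewrite /drift trans_mean_fst // layer_trans_mean.
under eq_bigr do under eq_bigr do rewrite avg_replace mulrDr.
under eq_bigr do rewrite big_split /= -big_distrl /= sum_birth_prob // mul1r mulrDr.
rewrite big_split /= -big_distrl /= sum_invn // mul1r addrAC subrr add0r.
congr (_ * _); rewrite -big_distrr /=; congr (_ * _).
under [RHS]eq_bigr do under eq_bigr do rewrite mulrBl.
under [RHS]eq_bigr do rewrite sumrB mulrBr.
rewrite sumrB sum_statdist_drift // subr0; apply: eq_bigr => i _.
by rewrite big_distrr; apply: eq_bigr => j _; rewrite mulrCA.
Qed.

Lemma fecundity_pos_near : \forall d \near 0^'+, fecundity_pos w1 b c r d.
Proof.
apply: filter_forall => x; apply: filter_forall => j.
exact: (cvgr_gt 1 (@cvg_right_affine R 1 (u x j)) 0 ltr01).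
Qed.

Lemma birth_den_fecundity d x i :
  \sum_k w1 i k * F d x k = strength w1 i + d * \sum_k w1 i k * u x k.
Proof.
rewrite /fecundity /strength big_distrr -big_split /=.
by apply: eq_bigr => k _; rewrite mulrDr mulr1 mulrCA.
Qed.

Lemma cvg_birth_prob_quot x i j :
  d^-1 * (birth_prob w1 (F d x) i j - P i j) @[d --> 0^'+] -->
  P i j * (u x j - \sum_k P i k * u x k).
Proof.
set K := \sum_k w1 i k * u x k; set s := strength w1 i.
have s_neq0 : s != 0 by rewrite gt_eqF ?strength_gt0.
have quotE : \forall d \near 0^'+, w1 i j * (u x j * s - K) / (s * (s + d * K)) =
    d^-1 * (birth_prob w1 (F d x) i j - P i j).
  near=> d.
  have Fd_pos : fecundity_pos w1 b c r d by near: d; exact: fecundity_pos_near.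
  have d_gt0 : 0 < d by near: d; exact: nbhs_right_gt.
  have := birth_den_gt0 hw1 (Fd_pos x) i; rewrite birth_den_fecundity -/K -/s => den_gt0.
  rewrite /birth_prob birth_den_fecundity mxE /fecundity -/K -/s; field.
  by rewrite s_neq0 !gt_eqF.
apply: cvg_trans (near_eq_cvg quotE) _.
have -> : P i j * (u x j - \sum_k P i k * u x k) = w1 i j * (u x j * s - K) / (s * s).
  have -> : \sum_k P i k * u x k = K / s.
    by rewrite /K big_distrl /=; apply: eq_bigr => k _; rewrite mxE mulrAC.
  by rewrite mxE -/s; field.
apply: cvgM; first exact: cvg_cst.
apply: cvgV; first by rewrite mulf_neq0.
by apply: cvgM; [exact: cvg_cst | exact: cvg_right_affine].
Unshelve. all: by end_near.
Qed.

Lemma cvg_drift_quot x : d^-1 * drift w1 w2 b c r d x @[d --> 0^'+] --> drift' x.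
Proof.
have quotE : \forall d \near 0^'+, (transient x)%:R * (N%:R^-1 * \sum_i pi i *
      \sum_j (d^-1 * (birth_prob w1 (F d x) i j - P i j)) * (Y x j - Y x i)) =
    d^-1 * drift w1 w2 b c r d x.
  near=> d.
  have Fd_pos : fecundity_pos w1 b c r d by near: d; exact: fecundity_pos_near.
  rewrite drift_birth_prob // [RHS]mulrCA; congr (_ * _); rewrite [RHS]mulrCA.
  congr (_ * _); rewrite big_distrr /=; apply: eq_bigr => i _.
  rewrite [RHS]mulrCA [in RHS]big_distrr /=.
  by congr (_ * _); apply: eq_bigr => j _; rewrite mulrA.
apply: cvg_trans (near_eq_cvg quotE) _.
apply: cvgMr; apply: cvgMr; apply: cvg_big; [exact: add_continuous | move=> i _].
apply: cvgMr; apply: cvg_big; [exact: add_continuous | move=> j _].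
by apply: cvgMl; exact: cvg_birth_prob_quot.
Unshelve. all: by end_near.
Qed.

End DriftDerivative.

Section WeakSelectionLimit.
Variables (R : realType) (N : nat) (w1 w2 : 'M[R]_N) (b c r : R).
Hypothesis N_gt0 : (0 < N)%N.
Hypotheses (hw1 : weighted_graph w1) (hw2 : weighted_graph w2).

Local Notation F d x := (fecundity w1 b c r d x).
Local Notation A d := (absorb_mx w1 w2 b c r d).
Local Notation rho d := (rho1 w1 w2 b c r d).

Lemma cvg_layer_trans w x z z' : weighted_graph w ->
  layer_trans w (F d x) z z' @[d --> 0^'+] --> layer_trans w (F 0 x) z z'.
Proof.
have cvg_F j : F d x j @[d --> 0^'+] --> F 0 x j.
  by rewrite /fecundity mul0r addr0; exact: cvg_right_affine.
move=> hw; apply: cvg_big; [exact: add_continuous | move=> i _].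
apply: cvgMr; apply: cvg_big; [exact: add_continuous | move=> j _].
case: eqP => _; last exact: cvg_cst.
apply: cvgM; first by apply: cvgMr; exact: cvg_F.
apply: cvgV; first by rewrite gt_eqF // (birth_den_gt0 hw (fecundity_pos0 w1 b c r x)).
by apply: cvg_big; [exact: add_continuous | move=> k _; apply: cvgMr; exact: cvg_F].
Qed.

Lemma cvg_absorb_mx a1 a2 : A d a1 a2 @[d --> 0^'+] --> A 0 a1 a2.
Proof.
rewrite mxE; under eq_fun do rewrite mxE.
apply: cvgB; first exact: cvg_cst.
by apply: cvgMr; apply: cvgM; apply: cvg_layer_trans.
Qed.

Definition rho_slope xi :=
  (invmx (A 0) *m \col_a drift' w1 b c r (state_at a)) (enum_rank xi) 0.

Lemma det_absorb_mx0_neq0 : \det (A 0) != 0.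
Proof. by have := absorb_mx0_unit b c r N_gt0 hw1 hw2; rewrite unitmxE unitfE. Qed.

Lemma cvg_det_absorb_mx : \det (A d) @[d --> 0^'+] --> \det (A 0).
Proof. by apply: cvg_det => a1 a2; exact: cvg_absorb_mx. Qed.

Lemma rho_quot_cramer xi : \forall d \near 0^'+,
  (\sum_a \adj (A d) (enum_rank xi) a * (d^-1 * drift w1 w2 b c r d (state_at a)))
    / \det (A d) = d^-1 * (rho d xi - rho 0 xi).
Proof.
have detA_neq0 := cvgr_neq0 _ cvg_det_absorb_mx det_absorb_mx0_neq0.
near=> d.
have Fd_pos : fecundity_pos w1 b c r d by near: d; exact: fecundity_pos_near.
have detAd_neq0 : \det (A d) != 0 by near: d; exact: detA_neq0.
have := gap_cramer N_gt0 hw1 hw2 Fd_pos xi; rewrite mxE => cramer.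
have -> : rho d xi - rho 0 xi = gap w1 w2 b c r d xi.
  by have := gap0 b c r N_gt0 hw1 hw2 xi; rewrite /gap => /eqP; rewrite subr_eq0 => /eqP ->.
under eq_bigr do rewrite mulrCA.
rewrite -big_distrr /= (eq_bigr (fun a => \adj (A d) (enum_rank xi) a *
  (\col_a drift w1 w2 b c r d (state_at a)) a 0)); last by move=> a _; rewrite mxE.
by rewrite -cramer mulrCA mulrAC divff // mul1r.
Unshelve. all: by end_near.
Qed.

Lemma rho_slope_cramer xi : rho_slope xi =
  (\sum_a \adj (A 0) (enum_rank xi) a * drift' w1 b c r (state_at a)) / \det (A 0).
Proof.
rewrite /rho_slope /invmx absorb_mx0_unit // !mxE big_distrl /=.
by apply: eq_bigr => a _; rewrite !mxE [RHS]mulrC -mulrA.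
Qed.

Lemma cvg_rho_quot xi : d^-1 * (rho d xi - rho 0 xi) @[d --> 0^'+] --> rho_slope xi.
Proof.
apply: cvg_trans (near_eq_cvg (rho_quot_cramer xi)) _; rewrite rho_slope_cramer.
apply: cvgM; last by apply: cvgV; [exact: det_absorb_mx0_neq0 | exact: cvg_det_absorb_mx].
apply: cvg_big; [exact: add_continuous | move=> a _].
apply: cvgM; last exact: cvg_drift_quot.
by apply: cvg_adj => a1 a2; exact: cvg_absorb_mx.
Qed.

End WeakSelectionLimit.

Definition outer (R : pzRingType) (N : nat) (f g : 'I_N -> R) : 'M[R]_N :=
  \matrix_(i, j) (f i * g j).

Section ThetaCalculus.
Variables (R : realType) (N : nat) (w : 'M[R]_N).
Hypothesis N_gt0 : (0 < N)%N.
Hypothesis hw : weighted_graph w.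

Local Notation P := (transP w).
Local Notation pi := (statdist w).

Lemma thetaD M M' n : theta w (M + M') n = theta w M n + theta w M' n.
Proof.
rewrite /theta -big_split /=; apply: eq_bigr => i _.
by rewrite -big_split /=; apply: eq_bigr => j _; rewrite mxE mulrDr.
Qed.

Lemma thetaZ a M n : theta w (a *: M) n = a * theta w M n.
Proof.
rewrite /theta big_distrr /=; apply: eq_bigr => i _.
by rewrite big_distrr /=; apply: eq_bigr => j _; rewrite mxE mulrCA.
Qed.

Lemma theta_const k n : theta w (const_mx k) n = k.
Proof.
rewrite /theta; under eq_bigr do under eq_bigr do rewrite mxE.
under eq_bigr do rewrite -big_distrl -big_distrr /= sum_transPX // mulr1.
by rewrite -big_distrl /= sum_statdist // mul1r.
Qed.

Lemma theta0 M : theta w M 0 = \sum_i pi i * M i i.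
Proof.
apply: eq_bigr => i _; rewrite -(sum_delta (fun j => pi i * M i j) i).
by apply: eq_bigr => j _; rewrite expr0 mxE mulrCA mulrA.
Qed.

Lemma theta_outerC f g n : theta w (outer f g) n = theta w (outer g f) n.
Proof.
rewrite /theta exchange_big /=; apply: eq_bigr => j _; apply: eq_bigr => i _.
by rewrite !mxE statdist_reversibleX // [f i * _]mulrC.
Qed.

Lemma theta_outer1 g n : theta w (outer g (fun=> 1)) n = \sum_i pi i * g i.
Proof.
apply: eq_bigr => i _; under eq_bigr do rewrite mxE mulr1 mulrAC.
by rewrite -big_distrr /= sum_transPX // mulr1.
Qed.

Lemma theta_outer_transP f g n :
  theta w (outer (fun i => \sum_l P i l * f l) g) n = theta w (outer f g) n.+1.
Proof.
transitivity (\sum_l \sum_j (\sum_i pi i * (P ^+ 1) i l * (P ^+ n) i j) * (f l * g j)).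
  rewrite /theta; under eq_bigr do under eq_bigr do rewrite mxE big_distrl big_distrr /=.
  rewrite exchange_big /=; under eq_bigr do rewrite exchange_big /=.
  rewrite exchange_big /=; apply: eq_bigr => l _; apply: eq_bigr => j _.
  by rewrite big_distrl /=; apply: eq_bigr => i _; rewrite expr1; ring.
apply: eq_bigr => l _; apply: eq_bigr => j _.
by rewrite sum_statdist_transPX // add1n mxE mulrA.
Qed.

Lemma sum_statdist_cov (u y : 'I_N -> R) :
  \sum_i pi i * \sum_j P i j * (u j - \sum_k P i k * u k) * (y j - y i) =
  theta w (outer u y) 0 - theta w (outer u y) 2.
Proof.
have row_cov i : \sum_j P i j * (u j - \sum_k P i k * u k) * (y j - y i) =
    \sum_j P i j * (u j * y j) - \sum_j \sum_k P i j * P i k * (u j * y k).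
  set U := \sum_k P i k * u k.
  have -> : \sum_j \sum_k P i j * P i k * (u j * y k) = U * \sum_k P i k * y k.
    rewrite /U big_distrl /=; apply: eq_bigr => j _; rewrite big_distrr /=.
    by apply: eq_bigr => k _; ring.
  transitivity (\sum_j (P i j * (u j * y j) - y i * (P i j * u j) - U * (P i j * y j)
                        + U * y i * P i j)).
    by apply: eq_bigr => j _; ring.
  by rewrite !big_split /= !sumrN -!big_distrr /= sum_transP // -/U; ring.
under eq_bigr do rewrite row_cov mulrBr.
rewrite sumrB (sum_statdist_transP hw N_gt0 (fun j => u j * y j)) theta0.
congr (_ - _); first by apply: eq_bigr => i _; rewrite mxE.
under eq_bigr do rewrite big_distrr /=.
rewrite exchange_big /=; apply: eq_bigr => j _.
under eq_bigr do rewrite big_distrr /=.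
rewrite exchange_big /=; apply: eq_bigr => k _.
rewrite [outer u y j k]mxE -[2%N]/(1 + 1)%N -sum_statdist_transPX // big_distrl /=.
by apply: eq_bigr => i _; rewrite !expr1 !mulrA.
Qed.

End ThetaCalculus.

Lemma phi_n0 (R : realType) (N : nat) (w1 w2 M : 'M[R]_N) n :
  phi w1 w2 M n 0 = theta w1 M n.
Proof. by apply: eq_bigr => i _; apply: eq_bigr => j _; rewrite expr0 mulmx1. Qed.

Section SlopeForm.
Variables (R : realType) (N : nat) (w1 : 'M[R]_N) (b c r : R).
Hypothesis N_gt0 : (0 < N)%N.
Hypothesis hw1 : weighted_graph w1.

Local Notation P := (transP w1).
Local Notation theta := (theta w1).

Definition slope_form (M M' : 'M[R]_N) :=
  c * (theta M 2 - theta M 0) + b * (theta M 1 - theta M 3)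
  - (r - 1) * (theta M' 2 - theta M' 0).

Lemma slope_form_shift M M' k k' :
  slope_form (M + const_mx k) (M' + const_mx k') = slope_form M M'.
Proof. by rewrite /slope_form !thetaD // !theta_const //; ring. Qed.

Lemma payoff_slope_form (x : state N) :
  let Y i := b2r R (x.1 i) in let Z i := b2r R (x.2 i) in
  theta (outer (payoff w1 b c r x) Y) 0 - theta (outer (payoff w1 b c r x) Y) 2 =
  slope_form (outer Y Y) (outer Y Z).
Proof.
move=> Y Z; have payoffE : outer (payoff w1 b c r x) Y =
    (- c) *: outer Y Y + b *: outer (fun i => \sum_l P i l * Y l) Y
    + (r - 1) *: outer Z Y + outer (fun=> 1) Y.
  apply/matrixP => i j; rewrite !mxE /payoff /Y /Z.
  by under eq_bigr do rewrite -mulrA; rewrite -big_distrr /=; ring.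
rewrite /slope_form payoffE !thetaD // !thetaZ // !theta_outer_transP //.
rewrite ![theta (outer Z Y) _]theta_outerC // ![theta (outer (fun=> 1) Y) _]theta_outerC //.
by rewrite !theta_outer1 //; ring.
Qed.

End SlopeForm.

Section CoalescenceUniqueness.
Variables (R : realType) (N : nat) (w1 w2 : 'M[R]_N).
Hypothesis N_gt0 : (0 < N)%N.
Hypotheses (hw1 : weighted_graph w1) (hw2 : weighted_graph w2).

Local Notation P1 := (transP w1).
Local Notation P2 := (transP w2).
Local Notation pi := (statdist w1).

Lemma beta_offdiag_le0 (H : 'M[R]_N) :
  (forall i, H i i = 0) ->
  (forall i j, i != j ->
     H i j = 2^-1 * \sum_k P1 i k * H k j + 2^-1 * \sum_k P1 j k * H i k) ->
  forall i j, H i j <= 0.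
Proof.
move=> H_diag H_off.
have [[im jm] H_le] := exists_argmax (Ordinal N_gt0, Ordinal N_gt0) (fun p => H p.1 p.2).
set M := H im jm in H_le *; have {}H_le i j : H i j <= M := H_le (i, j).
suff : M <= 0 by move=> M_le0 i j; apply: le_trans (H_le i j) M_le0.
rewrite leNgt; apply/negP => M_gt0.
have max_spreads k : H k jm = M -> forall l, 0 < w1 k l -> H l jm = M.
  move=> HkM l wkl; have kNjm : k != jm.
    by apply: contraTneq M_gt0 => kjm; rewrite -HkM kjm H_diag ltxx.
  have A1 : \sum_q P1 k q * H q jm <= M by apply: transP_mean_le.
  have B1 : \sum_q P1 jm q * H k q <= M by apply: transP_mean_le.
  have A2 : \sum_q P1 k q * H q jm = M by move: (H_off k jm kNjm); rewrite HkM; lra.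
  apply: (convex_comb_eq_max (transP_ge0 hw1 k) (sum_transP hw1 k) (H_le^~ jm) A2).
  exact: transP_gt0.
have H_col k : H k jm == M.
  apply: (@weight_closed_all _ _ _ hw1 (fun k => H k jm == M) im _ (eqxx _) k).
  by move=> k' l /eqP HkM wkl; apply/eqP; exact: (max_spreads k' HkM l wkl).
by move: M_gt0; rewrite -(eqP (H_col jm)) H_diag ltxx.
Qed.

Lemma beta_hom_eq0 (H : 'M[R]_N) :
  (forall i, H i i = \sum_k P1 i k * H k k) ->
  (forall i j, i != j ->
     H i j = 2^-1 * \sum_k P1 i k * H k j + 2^-1 * \sum_k P1 j k * H i k) ->
  \sum_i pi i * H i i = 0 -> H = 0.
Proof.
move=> H_diag H_off H_norm.
have H_diag0 i : H i i = 0.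
  have Hc := transP_harmonic_const hw1 N_gt0 (f := fun i => H i i) H_diag.
  move: H_norm; under eq_bigr do rewrite (Hc _ i).
  by rewrite -big_distrl /= sum_statdist // mul1r.
apply/matrixP => i j; rewrite mxE; apply/eqP; rewrite eq_le beta_offdiag_le0 //=.
rewrite -oppr_le0; have := beta_offdiag_le0 (H := - H) _ _ i j; rewrite mxE; apply.
  by move=> k; rewrite mxE H_diag0 oppr0.
move=> k l kNl; rewrite !mxE H_off // opprD.
rewrite -!mulrN -!sumrN.
by congr (_ * _ + _ * _); apply: eq_bigr => q _; rewrite [(- H) _ _]mxE mulrN.
Qed.

Hypothesis N_gt1 : (1 < N)%N.

Definition gamma_hom (G : 'M[R]_N) := forall i j, G i j =
    (2 * N%:R - 1)^-1 * \sum_(k1 < N) \sum_(k2 < N) P1 i k1 * P2 j k2 * G k1 k2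
  + (N%:R - 1) / (2 * N%:R - 1)
      * (\sum_(k < N) P1 i k * G k j + \sum_(k < N) P2 j k * G i k).

Lemma gamma_hom_max_means (G : 'M[R]_N) M k l :
  gamma_hom G -> (forall i j, G i j <= M) -> G k l = M ->
  \sum_q P1 k q * G q l = M /\ \sum_q P2 l q * G k q = M.
Proof.
move=> G_eq G_le GklM; have N_ge2 : (2 : R) <= N%:R by rewrite (ler_nat R 2 N).
have A1 : \sum_q P1 k q * G q l <= M by apply: transP_mean_le.
have B1 : \sum_q P2 l q * G k q <= M by apply: transP_mean_le.
have X1 : \sum_(k1 < N) \sum_(k2 < N) P1 k k1 * P2 l k2 * G k1 k2 <= M.
  under eq_bigr do under eq_bigr do rewrite -mulrA.
  under eq_bigr do rewrite -big_distrr /=.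
  by apply: transP_mean_le => // q; apply: transP_mean_le.
move: (G_eq k l); rewrite GklM.
set X := \sum_(k1 < N) _ in X1 *; set A := \sum_q _ in A1 *; set B := \sum_q _ in B1 *.
have den_gt0 : 0 < 2 * N%:R - 1 :> R by lra.
move=> /(congr1 ( *%R (2 * N%:R - 1))); rewrite mulrDr mulrA mulfV ?gt_eqF //.
by rewrite mul1r mulrA mulrCA mulfV ?gt_eqF // mulr1 => E; split; nra.
Qed.

Lemma gamma_hom_eq0 (G : 'M[R]_N) :
  gamma_hom G -> \sum_i pi i * G i i = 0 -> G = 0.
Proof.
move=> G_eq G_norm.
have [[im jm] G_le] := exists_argmax (Ordinal N_gt0, Ordinal N_gt0) (fun p => G p.1 p.2).
set M := G im jm in G_le; have {}G_le i j : G i j <= M := G_le (i, j).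
have G_col k : G k jm = M.
  apply/eqP; apply: (weight_closed_all hw1 (p := fun k => G k jm == M)) (eqxx _) k.
  move=> i q /eqP GiM wiq; apply/eqP.
  have [A _] := gamma_hom_max_means G_eq G_le GiM.
  apply: (convex_comb_eq_max (transP_ge0 hw1 i) (sum_transP hw1 i) (G_le^~ jm) A).
  exact: transP_gt0.
have G_const k l : G k l = M.
  apply/eqP; apply: (weight_closed_all hw2 (p := fun l => G k l == M)) (_ : G k jm == M) l.
    move=> i q /eqP GkiM wiq; apply/eqP.
    have [_ B] := gamma_hom_max_means G_eq G_le GkiM.
    apply: (convex_comb_eq_max (transP_ge0 hw2 i) (sum_transP hw2 i) (G_le k) B).
    exact: transP_gt0.
  by rewrite G_col.
have M0 : M = 0.
  move: G_norm; under eq_bigr do rewrite G_const.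
  by rewrite -big_distrl /= sum_statdist // mul1r.
by apply/matrixP => i j; rewrite G_const M0 mxE.
Qed.

Lemma beta_eqs_unique (z : {ffun 'I_N -> bool}) B1 B2 :
  beta_eqs w1 z B1 -> beta_eqs w1 z B2 -> B1 = B2.
Proof.
case=> diag1 off1 norm1 [diag2 off2 norm2]; apply/eqP; rewrite -subr_eq0; apply/eqP.
apply: beta_hom_eq0 => [i|i j iNj|].
- rewrite mxBE diag1 diag2.
  under [in RHS]eq_bigr do rewrite mxBE mulrBr.
  by rewrite sumrB; ring.
- rewrite mxBE off1 // off2 //.
  under [in RHS]eq_bigr do rewrite mxBE mulrBr.
  under [X in _ = _ + _ * X]eq_bigr do rewrite mxBE mulrBr.
  by rewrite !sumrB; ring.
- under eq_bigr do rewrite mxBE mulrBr.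
  by rewrite sumrB norm1 norm2 subrr.
Qed.

Lemma gamma_eqs_unique (x : state N) G1 G2 :
  gamma_eqs w1 w2 x G1 -> gamma_eqs w1 w2 x G2 -> G1 = G2.
Proof.
case=> eq1 norm1 [eq2 norm2]; apply/eqP; rewrite -subr_eq0; apply/eqP.
apply: gamma_hom_eq0 => [i j|].
  rewrite mxBE eq1 eq2.
  under [in RHS]eq_bigr do under eq_bigr do rewrite mxBE mulrBr.
  under [in RHS]eq_bigr do rewrite sumrB.
  under [X in _ = _ + _ * (X + _)]eq_bigr do rewrite mxBE mulrBr.
  under [X in _ = _ + _ * (_ + X)]eq_bigr do rewrite mxBE mulrBr.
  by rewrite !sumrB; ring.
under eq_bigr do rewrite mxBE mulrBr.
by rewrite sumrB norm1 norm2 subrr.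
Qed.

End CoalescenceUniqueness.

Section NeutralOccupation.
Variables (R : realType) (N : nat) (w1 w2 : 'M[R]_N) (b c r : R) (xi : state N).
Hypothesis N_gt1 : (1 < N)%N.
Hypotheses (hw1 : weighted_graph w1) (hw2 : weighted_graph w2).

Let N_gt0 : (0 < N)%N := ltnW N_gt1.

Local Notation T0 := (trans w1 w2 b c r 0).
Local Notation A0 := (absorb_mx w1 w2 b c r 0).
Local Notation P1 := (transP w1).
Local Notation P2 := (transP w2).
Local Notation pi := (statdist w1).
Local Notation Y1 y a := (b2r R (y.1 a)).
Local Notation Y2 y a := (b2r R (y.2 a)).

Definition green (y : state N) : R := invmx A0 (enum_rank xi) (enum_rank y).

Lemma green_absorb_coef z :
  \sum_y green y * absorb_coef w1 w2 b c r 0 y z = (z == xi)%:R.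
Proof.
have := mulVmx (absorb_mx0_unit b c r N_gt0 hw1 hw2).
move=> /matrixP /(_ (enum_rank xi) (enum_rank z)).
rewrite !mxE (inj_eq enum_rank_inj) eq_sym => <-.
rewrite -sum_state_at; apply: eq_bigr => a _.
by rewrite /green enum_rank_state_at mxE state_atK.
Qed.

Lemma green_solve (q : state N -> R) :
  \sum_y green y * (q y - (transient y)%:R * \sum_z T0 y z * q z) = q xi.
Proof.
under eq_bigr do rewrite -absorb_coef_mean big_distrr /=.
rewrite exchange_big /=.
under eq_bigr do (under eq_bigr do rewrite mulrA; rewrite -big_distrl /= green_absorb_coef).
by rewrite (bigD1 xi) //= eqxx mul1r big1 ?addr0 // => z /negbTE ->; rewrite mul0r.
Qed.

(* The expected sum of [f] along the neutral trajectory from [xi] up to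
   absorption. *)
Definition occupation (f : state N -> R) := \sum_y green y * (transient y)%:R * f y.

Lemma occupationD f g : occupation (fun y => f y + g y) = occupation f + occupation g.
Proof. by rewrite -big_split; apply: eq_bigr => y _; rewrite mulrDr. Qed.

Lemma occupationB f g : occupation (fun y => f y - g y) = occupation f - occupation g.
Proof. by rewrite -sumrB; apply: eq_bigr => y _; rewrite mulrBr. Qed.

Lemma occupation_sum (I : finType) (f : I -> state N -> R) :
  occupation (fun y => \sum_i f i y) = \sum_i occupation (f i).
Proof.
rewrite /occupation; under eq_bigr do rewrite big_distrr /=.
by rewrite exchange_big.
Qed.

Lemma eq_occupation f g : f =1 g -> occupation f = occupation g.
Proof. by move=> fg; congr occupation; apply: funext. Qed.

Lemma occupationZ a f : occupation (fun y => a * f y) = a * occupation f.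
Proof. by rewrite /occupation big_distrr; apply: eq_bigr => y _; rewrite mulrCA. Qed.

Lemma occupation_harmonic (q h : state N -> R) :
  (forall y, transient y -> \sum_z T0 y z * h z = h y) ->
  (forall y, ~~ transient y -> q y = h y) ->
  occupation (fun y => q y - \sum_z T0 y z * q z) = q xi - h xi.
Proof.
move=> h_harm q_abs; rewrite -{1}(green_solve q) -(green_solve h) -sumrB.
apply: eq_bigr => y _; rewrite -mulrA -mulrBr; congr (_ * _).
case: (boolP (transient y)) => y_tr; first by rewrite h_harm // !mul1r subrr subr0.
by rewrite !mul0r !subr0 q_abs // subrr.
Qed.

Definition occupation_mx (M : state N -> 'M[R]_N) : 'M[R]_N :=
  \matrix_(i, j) occupation (fun y => M y i j).

Lemma occupation_theta (M : state N -> 'M[R]_N) n :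
  occupation (fun y => theta w1 (M y) n) = theta w1 (occupation_mx M) n.
Proof.
rewrite /theta occupation_sum; apply: eq_bigr => i _; rewrite occupation_sum.
by apply: eq_bigr => j _; rewrite occupationZ mxE.
Qed.

Local Notation occ11 a a' := (occupation (fun y => Y1 y a * Y1 y a')).
Local Notation occ12 a a' := (occupation (fun y => Y1 y a * Y2 y a')).

Lemma occ11_diag a :
  N%:R^-1 * (occ11 a a - \sum_j P1 a j * occ11 j j) = Y1 xi a - avg w1 xi.1.
Proof.
have := occupation_harmonic (q := fun y => Y1 y a * Y1 y a)
          (fun y _ => trans0_mean_avg b c r N_gt0 hw1 hw2 y)
          (fun y y_abs => b2r11_absorbing N_gt0 hw1 a a y_abs).
rewrite b2rK => <-.
have pointwise (y : state N) : Y1 y a * Y1 y a - \sum_z T0 y z * (Y1 z a * Y1 z a) =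
    N%:R^-1 * (Y1 y a * Y1 y a - \sum_j P1 a j * (Y1 y j * Y1 y j)).
  under eq_bigr do rewrite b2rK.
  rewrite (trans0_mean_fst w1 b c r N_gt0 hw2 y (fun z => b2r R (z a))).
  rewrite neutral_mean_b2r // b2rK; under [in RHS]eq_bigr do rewrite b2rK.
  by field; rewrite pnatr_eq0 -lt0n.
rewrite (eq_occupation pointwise) occupationZ occupationB occupation_sum.
by congr (_ * (_ - _)); apply: eq_bigr => j _; rewrite occupationZ.
Qed.

Lemma occ11_offdiag a a' : a != a' ->
  N%:R^-1 * (2 * occ11 a a' - \sum_j P1 a j * occ11 j a' - \sum_j P1 a' j * occ11 a j) =
  Y1 xi a * Y1 xi a' - avg w1 xi.1.
Proof.
move=> aNa'; have := occupation_harmonic (q := fun y => Y1 y a * Y1 y a')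
  (fun y _ => trans0_mean_avg b c r N_gt0 hw1 hw2 y)
  (fun y y_abs => b2r11_absorbing N_gt0 hw1 a a' y_abs).
move=> <-.
have pointwise (y : state N) : Y1 y a * Y1 y a' - \sum_z T0 y z * (Y1 z a * Y1 z a') =
    N%:R^-1 * (2 * (Y1 y a * Y1 y a') - \sum_j P1 a j * (Y1 y j * Y1 y a')
               - \sum_j P1 a' j * (Y1 y a * Y1 y j)).
  rewrite (trans0_mean_fst w1 b c r N_gt0 hw2 y (fun z => b2r R (z a) * b2r R (z a'))).
  rewrite neutral_mean_b2r2 //.
  have sum_l : \sum_j P1 a j * ((Y1 y j - Y1 y a) * Y1 y a') =
      \sum_j P1 a j * (Y1 y j * Y1 y a') - Y1 y a * Y1 y a'.
    by rewrite -sum_transP_subr //; apply: eq_bigr => j _; rewrite mulrBl.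
  have sum_r : \sum_j P1 a' j * (Y1 y a * (Y1 y j - Y1 y a')) =
      \sum_j P1 a' j * (Y1 y a * Y1 y j) - Y1 y a * Y1 y a'.
    by rewrite -sum_transP_subr //; apply: eq_bigr => j _; rewrite mulrBr.
  by rewrite sum_l sum_r; ring.
rewrite (eq_occupation pointwise) occupationZ !occupationB occupationZ !occupation_sum.
by congr (_ * (_ - _ - _)); apply: eq_bigr => j _; rewrite occupationZ.
Qed.

Lemma occ12_eq a a' :
  (2 * N%:R - 1) * occ12 a a' - \sum_j \sum_k P1 a j * P2 a' k * occ12 j k
  - (N%:R - 1) * (\sum_j P1 a j * occ12 j a' + \sum_k P2 a' k * occ12 a k) =
  N%:R ^+ 2 * (Y1 xi a * Y2 xi a' - avg w1 xi.1 * avg w2 xi.2).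
Proof.
have := occupation_harmonic (q := fun y => Y1 y a * Y2 y a')
  (fun y _ => trans0_mean_avg_prod b c r N_gt0 hw1 hw2 y)
  (fun y y_abs => b2r12_absorbing N_gt0 hw1 hw2 a a' y_abs).
move=> <-; rewrite -occupationZ.
have pointwise (y : state N) :
    N%:R ^+ 2 * (Y1 y a * Y2 y a' - \sum_z T0 y z * (Y1 z a * Y2 z a')) =
    (2 * N%:R - 1) * (Y1 y a * Y2 y a')
    - \sum_j \sum_k P1 a j * P2 a' k * (Y1 y j * Y2 y k)
    - (N%:R - 1) * (\sum_j P1 a j * (Y1 y j * Y2 y a')
                    + \sum_k P2 a' k * (Y1 y a * Y2 y k)).
  rewrite (trans0_mean_prod w1 w2 b c r y (fun z => b2r R (z a)) (fun z => b2r R (z a'))).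
  rewrite !neutral_mean_b2r //.
  have -> : \sum_j \sum_k P1 a j * P2 a' k * (Y1 y j * Y2 y k) =
      (\sum_j P1 a j * Y1 y j) * (\sum_k P2 a' k * Y2 y k).
    rewrite big_distrl /=; apply: eq_bigr => j _; rewrite big_distrr /=.
    by apply: eq_bigr => k _; ring.
  rewrite [X in _ = _ - _ * (X + _)](eq_bigr (fun j => P1 a j * Y1 y j * Y2 y a'));
    last by move=> j _; ring.
  rewrite [X in _ = _ - _ * (_ + X)](eq_bigr (fun k => Y1 y a * (P2 a' k * Y2 y k)));
    last by move=> k _; ring.
  by rewrite -big_distrl -big_distrr /=; field; rewrite pnatr_eq0 -lt0n.
rewrite (eq_occupation pointwise) !occupationB !occupationZ occupationD !occupation_sum.
congr (_ - _ - _ * (_ + _)); apply: eq_bigr => j _; rewrite ?occupationZ //.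
by rewrite occupation_sum; apply: eq_bigr => k _; rewrite occupationZ.
Qed.

Definition beta_occ : 'M[R]_N :=
  \matrix_(i, j) (occ11 i j - \sum_k pi k * occ11 k k).

Lemma beta_eqs_occ : beta_eqs w1 xi.1 beta_occ.
Proof.
have N_neq0 : (N%:R : R) != 0 by rewrite pnatr_eq0 -lt0n.
split => [i|i j iNj|].
- rewrite [beta_occ _ _]mxE; under [in RHS]eq_bigr do rewrite [beta_occ _ _]mxE.
  by rewrite sum_transP_subr // -(occ11_diag i); field.
- rewrite [beta_occ _ _]mxE.
  under [X in _ = _ + _ * X + _]eq_bigr do rewrite [beta_occ _ _]mxE.
  under [X in _ = _ + _ + _ * X]eq_bigr do rewrite [beta_occ _ _]mxE.
  by rewrite !sum_transP_subr // -(occ11_offdiag iNj); field.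
- under eq_bigr do rewrite [beta_occ _ _]mxE mulrBr.
  by rewrite sumrB -big_distrl /= sum_statdist // mul1r subrr.
Qed.

Definition gamma_occ : 'M[R]_N :=
  \matrix_(i, j) (occ12 i j - \sum_k pi k * occ12 k k).

Lemma gamma_eqs_occ : gamma_eqs w1 w2 xi gamma_occ.
Proof.
have N_neq0 : (N%:R : R) != 0 by rewrite pnatr_eq0 -lt0n.
have N_ge2 : (2 : R) <= N%:R by rewrite (ler_nat R 2 N).
have den_neq0 : 2 * (N%:R : R) - 1 != 0 by rewrite gt_eqF //; lra.
split => [i j|]; last first.
  under eq_bigr do rewrite [gamma_occ _ _]mxE mulrBr.
  by rewrite sumrB -big_distrl /= sum_statdist // mul1r subrr.
rewrite [gamma_occ _ _]mxE; set k := \sum_k pi k * occ12 k k.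
have sum_P12 : \sum_(k1 < N) \sum_(k2 < N) P1 i k1 * P2 j k2 = 1.
  by under eq_bigr do rewrite -big_distrr /= sum_transP // mulr1; exact: sum_transP.
have sum12 : \sum_(k1 < N) \sum_(k2 < N) P1 i k1 * P2 j k2 * gamma_occ k1 k2 =
    \sum_(k1 < N) \sum_(k2 < N) P1 i k1 * P2 j k2 * occ12 k1 k2 - k.
  rewrite -[X in _ - X]mul1r -sum_P12 big_distrl /= -sumrB; apply: eq_bigr => k1 _.
  rewrite big_distrl /= -sumrB; apply: eq_bigr => k2 _.
  by rewrite [gamma_occ _ _]mxE mulrBr.
have sum1 : \sum_(l < N) P1 i l * gamma_occ l j = \sum_(l < N) P1 i l * occ12 l j - k.
  by rewrite -sum_transP_subr //; apply: eq_bigr => l _; rewrite [gamma_occ _ _]mxE.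
have sum2 : \sum_(l < N) P2 j l * gamma_occ i l = \sum_(l < N) P2 j l * occ12 i l - k.
  by rewrite -sum_transP_subr //; apply: eq_bigr => l _; rewrite [gamma_occ _ _]mxE.
have Yterm : b2r R (xi.1 i) * b2r R (xi.2 j) - avg w1 xi.1 * avg w2 xi.2 =
    ((2 * N%:R - 1) * occ12 i j
     - \sum_(k1 < N) \sum_(k2 < N) P1 i k1 * P2 j k2 * occ12 k1 k2
     - (N%:R - 1) * (\sum_(l < N) P1 i l * occ12 l j + \sum_(l < N) P2 j l * occ12 i l))
    / N%:R ^+ 2.
  by rewrite occ12_eq [RHS]mulrC mulKf // expf_neq0.
by rewrite sum12 sum1 sum2 Yterm; field; rewrite den_neq0.
Qed.

Lemma occupation_slope_form (M M' : state N -> 'M[R]_N) :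
  occupation (fun y => slope_form w1 b c r (M y) (M' y)) =
  slope_form w1 b c r (occupation_mx M) (occupation_mx M').
Proof.
by rewrite /slope_form occupationB occupationD !occupationZ !occupationB !occupation_theta.
Qed.

Lemma rho_slope_occupation :
  rho_slope w1 w2 b c r xi = N%:R^-1 * slope_form w1 b c r
    (occupation_mx (fun y => outer (fun a => Y1 y a) (fun a => Y1 y a)))
    (occupation_mx (fun y => outer (fun a => Y1 y a) (fun a => Y2 y a))).
Proof.
rewrite -occupation_slope_form -occupationZ /rho_slope !mxE /occupation -sum_state_at.
apply: eq_bigr => a _; rewrite mxE /green enum_rank_state_at /drift' -mulrA.
by rewrite sum_statdist_cov // payoff_slope_form.
Qed.

Lemma rho_slope_coalescence (beta gamma : 'M[R]_N) :
  beta_eqs w1 xi.1 beta -> gamma_eqs w1 w2 xi gamma ->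
  rho_slope w1 w2 b c r xi = N%:R^-1 * (c * theta w1 beta 2
    + b * (theta w1 beta 1 - theta w1 beta 3) - (r - 1) * phi w1 w2 gamma 2 0).
Proof.
move=> beta_sol gamma_sol; rewrite rho_slope_occupation.
have -> : occupation_mx (fun y => outer (fun a => Y1 y a) (fun a => Y1 y a)) =
    beta + const_mx (\sum_k pi k * occ11 k k).
  rewrite (beta_eqs_unique N_gt0 hw1 beta_sol beta_eqs_occ).
  apply/matrixP => i j.
  by rewrite !mxE subrK; apply: eq_occupation => y; rewrite mxE.
have -> : occupation_mx (fun y => outer (fun a => Y1 y a) (fun a => Y2 y a)) =
    gamma + const_mx (\sum_k pi k * occ12 k k).
  rewrite (gamma_eqs_unique N_gt0 hw1 hw2 N_gt1 gamma_sol gamma_eqs_occ).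
  apply/matrixP => i j.
  by rewrite !mxE subrK; apply: eq_occupation => y; rewrite mxE.
rewrite slope_form_shift // phi_n0; congr (_ * _).
case: beta_sol => _ _ beta_norm; case: gamma_sol => _ gamma_norm.
by rewrite /slope_form !theta0 // beta_norm gamma_norm; ring.
Qed.

End NeutralOccupation.

Theorem mainTheorem1 (R : realType) (N : nat) (w1 w2 : 'M[R]_N) (b c r : R)
    (xi : state N) (beta gamma : 'M[R]_N) :
  (2 <= N)%N ->
  weighted_graph w1 -> weighted_graph w2 ->
  0 <= r ->
  ~ (monomorphic xi.1 /\ monomorphic xi.2) ->
  beta_eqs w1 xi.1 beta ->
  gamma_eqs w1 w2 xi gamma ->
  exists l : R,
    ((fun d : R => d^-1 * (rho1 w1 w2 b c r d xi - rho1 w1 w2 b c r 0 xi))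
       @ 0^'+ --> l)
    /\ (0 < l <-> 0 < c * theta w1 beta 2 + b * (theta w1 beta 1 - theta w1 beta 3)
                      - (r - 1) * phi w1 w2 gamma 2 0).
Proof.
move=> N_gt1 hw1 hw2 _ _ beta_sol gamma_sol.
exists (rho_slope w1 w2 b c r xi); split.
  exact: (cvg_rho_quot (xi := xi) (ltnW N_gt1) hw1 hw2).
rewrite (rho_slope_coalescence b c r N_gt1 hw1 hw2 beta_sol gamma_sol).
by rewrite pmulr_rgt0 // invr_gt0 ltr0n ltnW.
Qed.
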